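(* For integers $k\ge1$ and $1\le j\le 2k-1$ put \[ a_{jk}=\sum_{i=\max(k-j,0)}^{k-1}\Big(-\frac12\Big)^i(j)_{k-i}\frac{(k-1+i)!}{(k-1-i)!\,i!}, \] with $(n)_r=n(n-1)\cdots(n-r+1)$, $(n)_0=1$. Then $a_{2k-1,k}=\dfrac{(2k-1)!}{2^{k-1}(k-1)!}\neq0$, and $a_{jk}=0$ for every even $j$ with $2\le j\le 2k-2$. *)

From HB Require Import structures.
From mathcomp Require Import all_boot all_order all_algebra.
Set Implicit Arguments. Unset Strict Implicit. Unset Printing Implicit Defensive.
Import Order.TTheory GRing.Theory Num.Theory.
Local Open Scope ring_scope.

Definition a (j k : nat) : rat :=
  \sum_(maxn (k - j) 0 <= i < k)
     (- (1 / 2)) ^+ i * ((j ^_ (k - i))%N)%:R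
       * (((k - 1 + i)`!)%N)%:R / ((((k - 1 - i)`!)%N)%:R * ((i`!)%N)%:R).

From HB Require Import structures.
From mathcomp Require Import all_boot all_order all_algebra.
From mathcomp Require Import zify ring.
Import GRing.Theory Num.Theory.

(* The sum a_{jk} is the value at x = j of a polynomial with a simple product
   form.  Its coefficients (k-1+i)!/((k-1-i)! i!) are the coefficients
   B r i = (r+i)!/((r-i)! i!) of the Bessel polynomials (r = k-1), and
     sum_{i <= r} (-1/2)^i B r i (x)_{r+1-i} = x (x-2) (x-4) ... (x-2r).
   This identity is proved by induction on r: multiplying by x - 2(r+1) and
   splitting that factor as (x - (r+1-i)) - (r+1+i) turns the sum into the
   next one, thanks to the Pascal-like recurrence
     B (r+1) (i+1) = B r (i+1) + 2 (r+1+i) B r i.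
   The terms with i < k - j dropped in the definition of a_{jk} vanish, so
   a_{j,r+1} = prod_{t <= r} (j - 2t).  The theorem follows: for j = 2r+1 the
   product is 1 * 3 * ... * (2r+1) = (2r+1)!/(2^r r!), and for even j <= 2r
   the factor t = j/2 is zero. *)

Lemma ffactnD (n m k : nat) : n ^_ (m + k) = n ^_ m * (n - m) ^_ k.
Proof.
elim: k => [|k IHk]; first by rewrite addn0 ffactn0 muln1.
by rewrite addnS !ffactnSr IHk subnDA mulnA.
Qed.

(* The coefficients of the Bessel polynomials, B r i = (r+i)!/((r-i)! i!),
   written so as to be visibly natural numbers (and 0 when i > r). *)
Definition bessel_coef (r i : nat) : nat := 'C(r + i, i) * r ^_ i.

Lemma bessel_coef_ffact (r i : nat) : bessel_coef r i * i`! = (r + i) ^_ (i + i).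
Proof. by rewrite /bessel_coef mulnAC bin_ffact ffactnD addnK. Qed.

Lemma bessel_coef_fact (r i : nat) : i <= r ->
  bessel_coef r i * ((r - i)`! * i`!) = (r + i)`!.
Proof.
move=> le_ir; rewrite mulnCA mulnC bessel_coef_ffact -(subnDr i r i).
by rewrite ffact_fact // leq_add2r.
Qed.

Lemma bessel_coef0 (r : nat) : bessel_coef r 0 = 1.
Proof. by rewrite /bessel_coef addn0 bin0 ffactn0. Qed.

Lemma bessel_coef_small (r i : nat) : r < i -> bessel_coef r i = 0.
Proof. by move=> lt_ri; rewrite /bessel_coef ffact_small ?muln0. Qed.

(* Pascal-like recurrence for the Bessel coefficients; after multiplying by
   (i+1)! it reduces to (r+i+2)(r+i+1) = (r+i+1)(r-i) + 2(r+i+1)(i+1). *)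
Lemma bessel_coefS (r i : nat) : i <= r ->
  bessel_coef r.+1 i.+1 = bessel_coef r i.+1 + 2 * (r.+1 + i) * bessel_coef r i.
Proof.
move=> le_ir; apply/eqP; rewrite -(eqn_pmul2r (fact_gt0 i.+1)); apply/eqP.
have lower_term : 2 * (r.+1 + i) * bessel_coef r i * i.+1`!
    = 2 * (r.+1 + i) * i.+1 * (r + i) ^_ (i + i).
  by rewrite factS -bessel_coef_ffact; ring.
rewrite mulnDl lower_term !bessel_coef_ffact.
have -> : r.+1 + i.+1 = (r + i).+2 by rewrite addnS addSn.
have -> : i.+1 + i.+1 = (i + i).+2 by rewrite addnS addSn.
rewrite !ffactSS addnS ffactSS ffactnSr.
have [d ->] : exists d, r = i + d by exists (r - i); rewrite subnKC.
have -> : i + d + i - (i + i) = d by lia.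
ring.
Qed.

Local Open Scope ring_scope.

(* One more factor of a falling factorial, read in a ring: (x)_{m+1} = (x)_m (x - m),
   also when m > x since both sides then vanish. *)
Lemma natr_ffactSr (R : pzRingType) (x m : nat) :
  (x ^_ m.+1)%:R = (x ^_ m)%:R * (x%:R - m%:R) :> R.
Proof.
rewrite ffactnSr natrM; have [le_mx | lt_xm] := leqP m x; first by rewrite natrB.
by rewrite ffact_small // !mul0r.
Qed.

Section BesselSum.
Variable R : numFieldType.

Definition bessel_sum (r x : nat) : R :=
  \sum_(0 <= i < r.+1) (- (1 / 2)) ^+ i * (bessel_coef r i)%:R * (x ^_ (r.+1 - i))%:R.

(* Writing d i, e i for the two halves of each term after splitting the factor,
   the recurrence of the coefficients matches the terms of both sides. *)
Lemma bessel_sumS (r x : nat) :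
  bessel_sum r.+1 x = bessel_sum r x * (x%:R - (2 * r.+1)%:R).
Proof.
pose d i : R := (- (1 / 2)) ^+ i * (bessel_coef r i)%:R * (x ^_ (r.+2 - i))%:R.
pose e i : R :=
  (- (1 / 2)) ^+ i * (bessel_coef r i)%:R * (r.+1 + i)%:R * (x ^_ (r.+1 - i))%:R.
have split_factor i : (i < r.+1)%N ->
    (- (1 / 2)) ^+ i * (bessel_coef r i)%:R * (x ^_ (r.+1 - i))%:R
      * (x%:R - (2 * r.+1)%:R) = d i - e i.
  (* the local definitions d, e are cleared so that [ring] does not unfold them *)
  move=> lt_ir; rewrite /d /e (subSn (ltnW lt_ir)) natr_ffactSr; clear d e.
  have -> : (2 * r.+1)%N = ((r.+1 - i) + (r.+1 + i))%N by lia.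
  rewrite natrD; ring.
have top_vanishes : d r.+1 = 0 by rewrite /d (bessel_coef_small r r.+1) // mulr0 mul0r.
have recur i : (i < r.+1)%N ->
    (- (1 / 2)) ^+ i.+1 * (bessel_coef r.+1 i.+1)%:R * (x ^_ (r.+2 - i.+1))%:R
      = d i.+1 - e i.
  move=> lt_ir; rewrite /d /e (bessel_coefS r i lt_ir) natrD !natrM exprS.
  clear split_factor top_vanishes d e.
  by field.
rewrite /bessel_sum big_distrl /=.
rewrite (eq_big_nat _ _ (fun i lt_ir => split_factor i (andP lt_ir).2)) sumrB.
have -> : \sum_(0 <= i < r.+1) d i = d 0%N + \sum_(0 <= i < r.+1) d i.+1.
  by rewrite -big_nat_recl // [RHS]big_nat_recr //= top_vanishes addr0.
rewrite big_nat_recl // (eq_big_nat _ _ (fun i lt_ir => recur i (andP lt_ir).2)).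
by rewrite sumrB /d !bessel_coef0 addrA.
Qed.

Lemma bessel_sum_prod (r x : nat) :
  bessel_sum r x = \prod_(t < r.+1) (x%:R - (2 * t)%:R).
Proof.
elim: r => [|r IHr].
  by rewrite /bessel_sum big_nat1 big_ord1 bessel_coef0 ffactn1 expr0 !mul1r subr0.
by rewrite bessel_sumS IHr [RHS]big_ord_recr.
Qed.
End BesselSum.

(* a_{j,r+1} is the Bessel sum at x = j: the terms omitted for i < r+1-j are
   zero since then (j)_{r+1-i} = 0. *)
Lemma a_bessel_sum (j r : nat) : a j r.+1 = bessel_sum rat r j.
Proof.
rewrite /a /bessel_sum maxn0 subn1 /=.
rewrite [RHS](big_cat_nat (leq0n (r.+1 - j)) (leq_subr j r.+1)) /=.
rewrite [X in _ = X + _]big_nat_cond [X in _ = X + _]big1 ?add0r; last first.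
  move=> i /andP [/andP [_ lt_i] _].
  by rewrite ffact_small ?mulr0 ?mul0r //; lia.
apply: eq_big_nat => i /andP [_ lt_ir].
rewrite -(bessel_coef_fact r i lt_ir) !natrM mulrA mulfK; first by rewrite mulrAC.
by rewrite mulf_neq0 // pnatr_eq0 -lt0n fact_gt0.
Qed.

Lemma odd_prod_fact (r : nat) :
  (\prod_(t < r.+1) (2 * t + 1) * (2 ^ r * r`!) = (2 * r + 1)`!)%N.
Proof.
elim: r => [|r IHr]; first by rewrite big_ord1.
rewrite big_ord_recr /= expnS factS.
have -> : (2 * r.+1 + 1 = (2 * r + 1).+2)%N by lia.
rewrite !factS -IHr; ring.
Qed.

Lemma prod_odd_rev (R : comPzRingType) (r : nat) :
  \prod_(t < r.+1) ((2 * r + 1)%:R - (2 * t)%:R : R)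
    = (\prod_(t < r.+1) (2 * t + 1))%:R.
Proof.
rewrite natr_prod (reindex_inj rev_ord_inj) /=; apply: eq_bigr => t _.
have lt_tr := ltn_ord t; rewrite -natrB; last by lia.
congr _%:R; rewrite subSS; lia.
Qed.

Theorem mainTheorem11 (k : nat) (hk : (1 <= k)%N) :
  a (2 * k - 1) k = (((2 * k - 1)`!)%N)%:R / ((2 ^ (k - 1))%N%:R * (((k - 1)`!)%N)%:R)
  /\ a (2 * k - 1) k != 0
  /\ (forall j : nat, (2 <= j <= 2 * k - 2)%N -> ~~ odd j -> a j k = 0).
Proof.
case: k hk => [//|r] _.
have -> : (2 * r.+1 - 1 = 2 * r + 1)%N by lia.
have denom_neq0 : (2 ^ r)%N%:R * (r`!)%:R != 0 :> rat.
  by rewrite mulf_neq0 // pnatr_eq0 -lt0n ?expn_gt0 ?fact_gt0.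
have value : a (2 * r + 1) r.+1 = ((2 * r + 1)`!)%:R / ((2 ^ r)%N%:R * (r`!)%:R).
  rewrite a_bessel_sum bessel_sum_prod prod_odd_rev -odd_prod_fact natrM.
  by rewrite [(2 ^ r * _)%N%:R]natrM mulfK.
rewrite subn1 /=; split; first exact: value.
split.
  by rewrite value mulf_neq0 ?invr_eq0 // pnatr_eq0 -lt0n fact_gt0.
move=> j /andP [_ lejr] even_j.
rewrite a_bessel_sum bessel_sum_prod; apply/eqP/prodf_eq0.
have lt_half : (j./2 < r.+1)%N by have := even_halfK even_j; lia.
exists (Ordinal lt_half) => //=.
by rewrite mul2n (even_halfK even_j) subrr.
Qed.
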